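(* For every $\theta=(\theta_1,\theta_2)\in\Theta$ and each $i\in\{1,2\}$, the smallest PSNE Pareto dominates the largest PSNE of $\mathcal{G}_\theta$: $$c_i\big(\theta_i,\underline{\mathbf a}^*(\theta)\big)\le c_i\big(\theta_i,\overline{\mathbf a}^*(\theta)\big).$$
   Context: Fix an integer $A_m\ge 1$, a weight $w>0$, and for $i\in\{1,2\}$ a finite set $\Theta_i\subset(0,\infty)$ of SNR values; let $\Theta=\Theta_1\times\Theta_2$, and write $-i$ for the index in $\{1,2\}\setminus\{i\}$. Let $c_e:(0,\infty)\times\{0,\dots,A_m\}\to\mathbb{R}_{+}$ be an arbitrary function. For each $\theta=(\theta_1,\theta_2)\in\Theta$, the two-player game $\mathcal{G}_\theta$ has strategy sets $\mathcal{A}_1=\mathcal{A}_2=\{0,1,\dots,A_m\}$ (profiles $\mathbf a=(a_1,a_2)$ ordered componentwise) and player $i$ minimizes the cost $$c_i(\theta_i,a_i,a_{-i})=w\,c_e(\theta_i,a_i)+\frac{1}{a_i+1}+\frac{a_{-i}}{a_i+1}.$$ A profile $\mathbf a^*$ is a pure strategy Nash equilibrium (PSNE) of $\mathcal{G}_\theta$ if $c_i(\theta_i,a_i^*,a_{-i}^* )\le c_i(\theta_i,a_i,a_{-i}^* )$ for all $i$ and all $a_i\in\mathcal{A}_i$. The set of PSNEs of $\mathcal{G}_\theta$ has a componentwise largest element $\overline{\mathbf a}^*(\theta)$ and a componentwise smallest element $\underline{\mathbf a}^*(\theta)$; $c_i(\theta_i,\mathbf a)$ means $c_i(\theta_i,a_i,a_{-i})$.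 *)

From Stdlib Require Import Reals List.
Open Scope R_scope.

Definition cost (w : R) (ce : R -> nat -> R) (th : R) (ai aj : nat) : R :=
  w * ce th ai + 1 / (INR ai + 1) + INR aj / (INR ai + 1).

Definition is_PSNE (Am : nat) (w : R) (ce : R -> nat -> R) (th1 th2 : R)
  (a1 a2 : nat) : Prop :=
  (a1 <= Am)%nat /\ (a2 <= Am)%nat /\
  (forall b : nat, (b <= Am)%nat -> cost w ce th1 a1 a2 <= cost w ce th1 b a2) /\
  (forall b : nat, (b <= Am)%nat -> cost w ce th2 a2 a1 <= cost w ce th2 b a1).

(* The cost of a player only increases with the opponent's action, and the
   smallest equilibrium lies below the largest one componentwise.  Hence
   at the smallest equilibrium each player can deviate to her action in the
   largest one and pay at most what she pays there; being in equilibrium,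
   she pays even less without deviating. *)

From Stdlib Require Import Reals List Lra.
Open Scope R_scope.

Lemma cost_le_opponent (w : R) (ce : R -> nat -> R) (th : R) (a x y : nat) :
  (x <= y)%nat -> cost w ce th a x <= cost w ce th a y.
Proof.
  intros hxy; unfold cost.
  apply Rplus_le_compat_l, Rmult_le_compat_r.
  - assert (0 <= INR a) by apply pos_INR.
    left; apply Rinv_0_lt_compat; lra.
  - now apply le_INR.
Qed.

Lemma best_response_cost_le (w : R) (ce : R -> nat -> R) (th : R) (Am a x b y : nat) :
  (forall b', (b' <= Am)%nat -> cost w ce th a x <= cost w ce th b' x) ->
  (b <= Am)%nat -> (x <= y)%nat -> cost w ce th a x <= cost w ce th b y.
Proof.
  intros hbest hb hxy.
  apply Rle_trans with (cost w ce th b x); [now apply hbest|].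
  now apply cost_le_opponent.
Qed.

Theorem theorem2
  (Am : nat) (hAm : (1 <= Am)%nat) (w : R) (hw : 0 < w)
  (Theta1 Theta2 : list R)
  (hT1 : forall t, In t Theta1 -> 0 < t) (hT2 : forall t, In t Theta2 -> 0 < t)
  (ce : R -> nat -> R)
  (hce : forall t a, 0 < t -> (a <= Am)%nat -> 0 <= ce t a)
  (th1 th2 : R) (hth1 : In th1 Theta1) (hth2 : In th2 Theta2)
  (l1 l2 u1 u2 : nat)
  (hl : is_PSNE Am w ce th1 th2 l1 l2)
  (hl_min : forall b1 b2, is_PSNE Am w ce th1 th2 b1 b2 -> (l1 <= b1)%nat /\ (l2 <= b2)%nat)
  (hu : is_PSNE Am w ce th1 th2 u1 u2)
  (hu_max : forall b1 b2, is_PSNE Am w ce th1 th2 b1 b2 -> (b1 <= u1)%nat /\ (b2 <= u2)%nat) :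
  cost w ce th1 l1 l2 <= cost w ce th1 u1 u2 /\
  cost w ce th2 l2 l1 <= cost w ce th2 u2 u1.
Proof.
  destruct (hl_min u1 u2 hu) as [hlu1 hlu2].
  destruct hl as [_ [_ [hbest1 hbest2]]].
  destruct hu as [hu1 [hu2 _]].
  split; eapply best_response_cost_le; eauto.
Qed.
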